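(* Let $S\subseteq\mathbb{Z}$ and let $\mathbf{a}=(a_i)_{i=0}^n$ be any $n+1$ integers in $S$. Then for any $\mathcal{T}\subseteq\mathbb{N}$, the product $$\prod_{b\in\mathcal{T}}b^{\gamma(S,b,\mathbf{a})},\qquad \gamma(S,b,\mathbf{a}):=\sum_{0\le i<j\le n}\operatorname{ord}_b(a_i-a_j),$$ is a multiple of $0!_{S,\mathcal{T}}\,1!_{S,\mathcal{T}}\cdots n!_{S,\mathcal{T}}$.
   Context: $\mathbb{N}=\{0,1,2,\dots\}$. For an integer $b\ge0$ and $a\in\mathbb{Z}$ define $\operatorname{ord}_b(a):=\sup\{k\in\mathbb{N}: a\mathbb{Z}\subseteq b^k\mathbb{Z}\}$ (convention $0^0=1$); thus for $b\ge2$ it is the largest $k$ with $b^k\mid a$ ($+\infty$ for $a=0$), $\operatorname{ord}_0(a)=+\infty$ if $a=0$ and $0$ otherwise, and $\operatorname{ord}_1(a)=+\infty$. For nonempty $S\subseteq\mathbb{Z}$, a $b$-ordering of $S$ is a sequence $(a_i)_{i\ge0}$ in $S$ such that for each $i\ge1$, $a_i$ attains $\min_{a'\in S}\sum_{j=0}^{i-1}\operatorname{ord}_b(a'-a_j)$; the $b$-exponent sequence is $\alpha_k(S,b):=\sum_{j=0}^{k-1}\operatorname{ord}_b(a_k-a_j)$ for any $b$-ordering (independent of the choice). For $\mathcal{T}\subseteq\mathbb{N}$ the generalized factorial is $k!_{S,\mathcal{T}}:=\prod_{b\in\mathcal{T}}b^{\alpha_k(S,b)}$, with conventions $b^{+\infty}=0$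 for $b=0$ and $b\ge2$, $1^{+\infty}=1$, and $b^0=1$ for all $b\in\mathbb{N}$ (these conventions also apply to $b^{\gamma}$). *)

From Stdlib Require Import ClassicalEpsilon.
From mathcomp Require Import all_boot all_order all_algebra.
Set Implicit Arguments. Unset Strict Implicit. Unset Printing Implicit Defensive.
Import Order.TTheory GRing.Theory Num.Theory.

(* Extended naturals N ∪ {+oo}: [Some k] = k, [None] = +oo. *)
Definition enat := option nat.

Definition addE (x y : enat) : enat :=
  match x, y with Some m, Some n => Some (m + n) | _, _ => None end.

Definition leE (x y : enat) : bool :=
  match x, y with
  | _, None => true
  | None, Some _ => false
  | Some m, Some n => m <= n
  end.

Definition sumE (s : seq enat) : enat := foldr addE (Some 0) s.

(* b^e with conventions b^(+oo) = 0 for b = 0 and b >= 2, 1^(+oo) = 1,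
   and b^0 = 1 (in particular 0^0 = 1, as for ssrnat's expn). *)
Definition powE (b : nat) (e : enat) : nat :=
  match e with Some k => b ^ k | None => if b == 1 then 1 else 0 end.

(* ord_b(a) = sup { k in N : aZ ⊆ b^k Z } = sup { k : b^k | a }.
   Since b^0 = 1 divides a and {k : b^k | a} is downward closed, this sup is
   the least k such that b^(k+1) does not divide a, or +oo if there is none. *)
Definition ord (b : nat) (a : int) : enat :=
  match excluded_middle_informative
          (exists k, ~~ ((b ^ k.+1)%:Z %| a)%Z) with
  | left H => Some (ex_minn H)
  | right _ => None
  end.

Definition sumord (b : nat) (a : nat -> int) (i : nat) (x : int) : enat :=
  sumE [seq ord b (x - a j)%R | j <- iota 0 i].

Definition is_b_ordering (S : int -> Prop) (b : nat) (a : nat -> int) : Prop :=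
  (forall i, S (a i)) /\
  (forall i, 1 <= i -> forall a', S a' -> leE (sumord b a i (a i)) (sumord b a i a')).

(* A (classically chosen) b-ordering of S (junk if S is empty). *)
Definition some_b_ordering (S : int -> Prop) (b : nat) : nat -> int :=
  epsilon (inhabits (fun _ : nat => 0%R)) (is_b_ordering S b).

Definition alpha (S : int -> Prop) (b k : nat) : enat :=
  let a := some_b_ordering S b in sumord b a k (a k).

Definition gamma (b n : nat) (a : nat -> int) : enat :=
  sumE [seq ord b (a ij.1 - a ij.2)%R
       | ij <- [seq (i, j) | i <- iota 0 n.+1, j <- iota 0 n.+1] & ij.1 < ij.2].

(* [HasProd T f v]: the (possibly infinite) product prod_{b in T} f b of
   natural numbers is well defined and equals v: either some factor is 0
   (and then v = 0), or all factors are nonzero, only finitely many differ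
   from 1, and v is the product of those. *)
Definition HasProd (T : nat -> Prop) (f : nat -> nat) (v : nat) : Prop :=
  (exists b, T b /\ f b = 0 /\ v = 0) \/
  ((forall b, T b -> f b <> 0) /\
   exists s : seq nat, uniq s /\ (forall b, b \in s <-> (T b /\ f b <> 1)) /\
                       v = \prod_(b <- s) f b).

(* k!_{S,T} = prod_{b in T} b^{alpha_k(S,b)} equals w. *)
Definition IsGenFact (S : int -> Prop) (T : nat -> Prop) (k w : nat) : Prop :=
  HasProd T (fun b => powE b (alpha S b k)) w.

From Stdlib Require Import ClassicalEpsilon Wf_nat.
From HB Require Import structures.
From mathcomp Require Import all_boot all_order all_algebra zify.
Set Implicit Arguments. Unset Strict Implicit. Unset Printing Implicit Defensive.
Import GRing.Theory.

(* Fix b <> 1 (for b = 1 every factor is 1). The exponent of b in the product of the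
   generalized factorials is sum_{k <= n} alpha_k(S, b), and the claim is that it is at most
   gamma(S, b, a). By induction on n it suffices to find, among the n + 2 points X, a pivot x
   such that for every m fewer of the first n + 1 terms C of a b-ordering than points of X
   are congruent to x mod b^m. Summing these counts over m gives
   sum_{c in C} ord_b(x - c) <= sum_{y in X - x} ord_b(x - y), and alpha_{n+1} is at most
   the left-hand side by minimality of the b-ordering. The pivot is found by descending
   through the residue classes mod b, b^2, ..., always keeping a class that contains more
   points of X than of C, until the class contains a single point of X.
   The products over T are well defined: once b exceeds all the differences involved,
   gamma(S, b, a) is 0 or infinite, and alpha_k(S, b) = 0 as soon as alpha_k(S, b0) is
   finite for some b0 <> 1, since the first k + 1 terms of a b0-ordering are then distinct. *)

Lemma leE_trans y x z : leE x y -> leE y z -> leE x z.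
Proof. by case: x; case: y; case: z => //= ? ? ?; apply: leq_trans. Qed.

Lemma leE_add x1 x2 y1 y2 : leE x1 y1 -> leE x2 y2 -> leE (addE x1 x2) (addE y1 y2).
Proof. by case: x1; case: x2; case: y1; case: y2 => //= ? ? ? ?; apply: leq_add. Qed.

Lemma leE_addr x y : leE x (addE x y).
Proof. by case: x; case: y => //= ? ?; apply: leq_addr. Qed.

Lemma leE_Some0 x : leE (Some 0) x.
Proof. by case: x. Qed.

Lemma enat_ext x y : (forall m, leE (Some m) x = leE (Some m) y) -> x = y.
Proof.
case: x => [m|]; case: y => [n|] eq_xy //=; last 2 first.
- by move: (eq_xy m.+1); rewrite /= ltnn.
- by move: (eq_xy n.+1); rewrite /= ltnn.
congr Some; apply/eqP; rewrite eqn_leq.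
by move: (eq_xy m) (eq_xy n) => /= <- ->; rewrite !leqnn.
Qed.

Lemma addEA : associative addE.
Proof. by case=> [?|] [?|] [?|] //=; rewrite addnA. Qed.

Lemma addEC : commutative addE.
Proof. by case=> [?|] [?|] //=; rewrite addnC. Qed.

Lemma add0E : left_id (Some 0) addE.
Proof. by case. Qed.

HB.instance Definition _ := Monoid.isComLaw.Build enat (Some 0) addE addEA addEC add0E.

Lemma sumE_big s : sumE s = \big[addE/Some 0]_(e <- s) e.
Proof. by elim: s => [|e s IHs]; rewrite ?big_nil ?big_cons //= IHs. Qed.

Lemma sumE_cat s1 s2 : sumE (s1 ++ s2) = addE (sumE s1) (sumE s2).
Proof. by rewrite !sumE_big big_cat. Qed.

Lemma sumE_None s : None \in s -> sumE s = None.
Proof. by elim: s => //= e s IHs; rewrite inE => /predU1P[<-|/IHs->] //; case: e. Qed.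

Lemma mem_leE_sumE e s : e \in s -> leE e (sumE s).
Proof.
elim: s => //= x s IHs; rewrite inE => /predU1P[->|/IHs]; first exact: leE_addr.
by move/leE_trans; apply; rewrite addEC leE_addr.
Qed.

Lemma sum_ord_ltn M j : j <= M -> \sum_(k < M) (k < j) = j.
Proof.
move=> le_jM; rewrite -(big_mkord xpredT (fun k => (k < j) : nat)).
rewrite (@big_cat_nat _ _ _ j) //=.
rewrite (@eq_big_nat _ _ _ 0 j _ (fun=> 1)) => [|k /andP[_ ->]] //.
rewrite (@eq_big_nat _ _ _ j M _ (fun=> 0)) => [|k /andP[le_jk _]]; last first.
  by rewrite ltnNge le_jk.
by rewrite !sum_nat_const_nat muln0 muln1 addn0 subn0.
Qed.

Lemma sumE_layers M s : all (leE^~ (Some M)) s ->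
  sumE s = Some (\sum_(k < M) count (leE (Some k.+1)) s).
Proof.
elim: s => [|e s IHs] /=; first by rewrite big1.
by case: e => // j /andP[le_jM /IHs ->] /=; rewrite big_split /= sum_ord_ltn.
Qed.

Lemma leE_sumE_count u w :
  (forall k, count (leE (Some k)) u <= count (leE (Some k)) w) -> leE (sumE u) (sumE w).
Proof.
move=> le_count; case Ew: (sumE w) => [W|]; last by case: (sumE u).
have w_le : all (leE^~ (Some W)) w by apply/allP => e /mem_leE_sumE; rewrite Ew.
have w_small : count (leE (Some W.+1)) w = 0.
  apply/eqP; rewrite -leqn0 leqNgt -has_count; apply/hasPn => e /(allP w_le).
  by case: e => //= k; rewrite -leqNgt.
have u_le : all (leE^~ (Some W)) u.
  apply/allP => e e_u; apply: contraT => not_le.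
  suff : 0 < count (leE (Some W.+1)) u by rewrite lt0n -leqn0 -w_small le_count.
  rewrite -has_count; apply/hasP; exists e => //.
  by case: e {e_u} not_le => //= k; rewrite -ltnNge.
have := sumE_layers w_le; rewrite Ew => -[->]; rewrite (sumE_layers u_le).
exact: leq_sum.
Qed.

Lemma powE1 x : powE 1 x = 1.
Proof. by case: x => //= k; rewrite exp1n. Qed.

Lemma powE_addE b : {morph powE b : x y / addE x y >-> x * y}.
Proof.
have [->|b_neq1] := eqVneq b 1; first by move=> x y; rewrite !powE1.
by case=> [m|] [n|] /=; rewrite ?expnD ?(negbTE b_neq1) ?muln0.
Qed.

Lemma powE_dvd b x y : leE x y -> powE b x %| powE b y.
Proof.
have [->|b_neq1] := eqVneq b 1; first by rewrite !powE1.
by case: x => [m|]; case: y => [n|] //= le_xy; rewrite ?dvdn_exp2l ?(negbTE b_neq1) ?dvdn0.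
Qed.

Lemma dvdz_exp2l b k l : k <= l -> ((b ^ k)%:Z %| (b ^ l)%:Z)%Z.
Proof. by move=> le_kl; rewrite dvdzE !absz_nat dvdn_exp2l. Qed.

Lemma dvdz_small (d : nat) (z : int) : z != 0%R -> `|z|%N < d -> ~~ (d%:Z %| z)%Z.
Proof.
move=> z_neq0 lt_zd; rewrite dvdzE absz_nat; apply/negP => /dvdn_leq.
by rewrite absz_gt0 z_neq0 leqNgt lt_zd => /(_ isT).
Qed.

Lemma dvdz_exp_small b N (z : int) : b != 1 -> z != 0%R -> `|z|%N < N ->
  ~~ ((b ^ N)%:Z %| z)%Z.
Proof.
case: b => [|[|b]] // _ z_neq0 lt_zN; first by rewrite exp0n ?dvd0z // (leq_ltn_trans _ lt_zN).
by apply: dvdz_small z_neq0 (ltn_trans lt_zN (ltn_expl _ _)).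
Qed.

Lemma ord_ge b m z : leE (Some m) (ord b z) = ((b ^ m)%:Z %| z)%Z.
Proof.
rewrite /ord; case: excluded_middle_informative => [ex|nex].
  case: ex_minnP => k not_dvd k_min /=; apply/idP/idP => [le_mk|dvd_m].
    case: m le_mk => [|m] le_mk; first by rewrite expn0 dvd1z.
    by apply: contraT => /k_min; rewrite leqNgt le_mk.
  rewrite leqNgt; apply: contra not_dvd => lt_km.
  exact: dvdz_trans (dvdz_exp2l b lt_km) dvd_m.
case: m => [|m] /=; first by rewrite expn0 dvd1z.
by symmetry; apply: contraT => not_dvd; case: nex; exists m.
Qed.

Lemma ord0 b : ord b 0 = None.
Proof. by apply: enat_ext => m; rewrite ord_ge dvdz0. Qed.

Lemma ordN b (x y : int) : ord b (x - y)%R = ord b (y - x)%R.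
Proof. by apply: enat_ext => m; rewrite !ord_ge -opprB dvdzE abszN -dvdzE. Qed.

Lemma ord_small b (z : int) : z != 0%R -> `|z|%N < b -> ord b z = Some 0.
Proof.
move=> z_neq0 lt_zb; apply: enat_ext => -[|m]; first by rewrite ord_ge expn0 dvd1z.
rewrite ord_ge /=; apply/negbTE; apply: contra (dvdz_small z_neq0 lt_zb).
by apply: dvdz_trans; rewrite dvdzE !absz_nat expnS dvdn_mulr.
Qed.

Definition diam (s : seq int) : nat := \max_(x <- s) \max_(y <- s) `|(x - y)%R|%N.

Lemma diam_ge s x y : x \in s -> y \in s -> `|(x - y)%R|%N <= diam s.
Proof.
move=> xs ys; apply: leq_trans (leq_bigmax_seq x xs isT).
exact: (leq_bigmax_seq y ys isT).
Qed.

Definition ordsum b (x : int) (s : seq int) : enat := sumE [seq ord b (x - y)%R | y <- s].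

Fixpoint ordpairs b (s : seq int) : enat :=
  if s is x :: s' then addE (ordsum b x s') (ordpairs b s') else Some 0.

Lemma ordsum_perm b x s1 s2 : perm_eq s1 s2 -> ordsum b x s1 = ordsum b x s2.
Proof. by rewrite /ordsum !sumE_big !big_map; apply: perm_big. Qed.

Lemma ordsum_mem b x s : x \in s -> ordsum b x s = None.
Proof. by move=> xs; apply: sumE_None; apply/mapP; exists x; rewrite ?subrr ?ord0. Qed.

Lemma ordpairs_rem b x s : x \in s ->
  ordpairs b s = addE (ordsum b x (rem x s)) (ordpairs b (rem x s)).
Proof.
elim: s => //= y s IHs; rewrite inE; have [->|ne_yx] //= := eqVneq y x.
move=> xs; rewrite (IHs xs) (ordsum_perm b y (perm_to_rem xs)).
by rewrite /ordsum /= -/(ordsum b x _) -/(ordsum b y _) ordN Monoid.mulmACA.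
Qed.

Lemma ordpairs_small b s : (forall x y, x \in s -> y \in s -> `|(x - y)%R|%N < b) ->
  ordpairs b s = if uniq s then Some 0 else None.
Proof.
elim: s => //= x s IHs small; rewrite IHs => [|y z ys zs]; last first.
  by apply: small; rewrite inE ?ys ?zs orbT.
have [xs|xNs] /= := boolP (x \in s); first by rewrite ordsum_mem.
rewrite /ordsum sumE_big big_map big1_seq ?add0E // => y /andP[_ ys].
apply: ord_small; last by apply: small; rewrite inE ?eqxx ?ys ?orbT.
by rewrite subr_eq0; apply: contraNneq xNs => ->.
Qed.

Lemma filter_iota_gt i k : [seq j <- iota 0 (i + k.+1) | i < j] = iota i.+1 k.
Proof.
rewrite addnS -addSn iotaD filter_cat add0n.
rewrite (eq_in_filter (a2 := pred0)) => [|j]; last first.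
  by rewrite mem_iota add0n ltnS ltnNge => /andP[_ ->].
by rewrite filter_pred0 /=; apply/all_filterP/allP => j; rewrite mem_iota => /andP[].
Qed.

Lemma gammaE b n a : gamma b n a = ordpairs b [seq a i | i <- iota 0 n.+1].
Proof.
rewrite /gamma; set N := n.+1.
suff gen k i : i + k = N ->
    sumE [seq ord b (a ij.1 - a ij.2)%R
         | ij <- [seq (i', j) | i' <- iota i k, j <- iota 0 N] & ij.1 < ij.2]
    = ordpairs b [seq a i' | i' <- iota i k] by exact: gen.
elim: k i => // k IHk i eq_N.
rewrite [iota i k.+1]/= allpairs_cons filter_cat map_cat sumE_cat [RHS]/=.
rewrite -(IHk i.+1) ?addSnnS //; congr addE.
by rewrite filter_map -eq_N filter_iota_gt /ordsum -!map_comp.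
Qed.

Lemma count_fiber_filter (T U : eqType) (g : T -> U) (p : pred T) x s :
  (forall y, g y = g x -> p y) ->
  count (preim g (pred1 (g x))) (filter p s) = count (preim g (pred1 (g x))) s.
Proof.
by move=> fiber_p; rewrite count_filter; apply: eq_count => y; apply/andb_idr => /eqP/fiber_p.
Qed.

Lemma fiber_pigeonhole (T U : eqType) (g : T -> U) (X C : seq T) : size C < size X ->
  exists2 x, x \in X & count (preim g (pred1 (g x))) C < count (preim g (pred1 (g x))) X.
Proof.
have [N] := ubnP (size X); elim: N => // N IHN in X C *.
case: X => [|r X] // lt_XN lt_CX; set p := preim g (pred1 (g r)).
have [lt_r|le_r] := ltnP (count p C) (count p (r :: X)).
  by exists r; rewrite ?mem_head.
have r_p : 0 < count p (r :: X) by rewrite /= /p /= eqxx.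
have split_X := count_predC p (r :: X); have split_C := count_predC p C.
have le_pC := count_size p C.
have lt_X'N : size (filter (predC p) (r :: X)) < N by rewrite size_filter; lia.
have lt_C'X' : size (filter (predC p) C) < size (filter (predC p) (r :: X)).
  by rewrite !size_filter; lia.
have [x] := IHN _ _ lt_X'N lt_C'X'.
rewrite mem_filter => /andP[xNp xX].
have fiber_x s : count (preim g (pred1 (g x))) (filter (predC p) s) =
                 count (preim g (pred1 (g x))) s.
  by apply: count_fiber_filter => y /= ->.
by rewrite !fiber_x => lt_x; exists x.
Qed.

Lemma nested_fiber_descent (T U : eqType) N (f : nat -> T -> U) (X C : seq T) :
    (forall k l x y, k <= l -> f l x = f l y -> f k x = f k y) ->
    {in X &, injective (f N)} -> {in X ++ C &, forall x y, f 0 x = f 0 y} ->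
    size C < size X ->
  exists2 x, x \in X &
    forall k, count (preim (f k) (pred1 (f k x))) C < count (preim (f k) (pred1 (f k x))) X.
Proof.
elim: N f X C => [|N IHN] f X C f_coarsen f_inj f0_const lt_CX.
  case: X f_inj f0_const lt_CX => [|x X] // f_inj f0_const lt_CX.
  exists x => [|k]; first exact: mem_head.
  have : all (preim (f k) (pred1 (f k x))) (x :: X).
    apply/allP => y yX; suff -> : y = x by rewrite /= eqxx.
    by apply: f_inj; rewrite ?mem_head //; apply: f0_const; rewrite mem_cat ?yX ?mem_head.
  by rewrite all_count => /eqP->; apply: leq_ltn_trans (count_size _ C) lt_CX.
have [r rX lt_r] := fiber_pigeonhole (f 1) lt_CX; set p := preim (f 1) (pred1 (f 1 r)).
have f_coarsen' k l y z : k <= l -> f l.+1 y = f l.+1 z -> f k.+1 y = f k.+1 z.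
  by move=> le_kl; apply: f_coarsen; rewrite ltnS.
have f_inj' : {in filter p X &, injective (f N.+1)}.
  by move=> y z; rewrite !mem_filter => /andP[_ yX] /andP[_ zX]; apply: f_inj.
have f1_const : {in filter p X ++ filter p C &, forall y z, f 1 y = f 1 z}.
  by move=> y z; rewrite !mem_cat !mem_filter => /orP[]/andP[/eqP-> _] /orP[]/andP[/eqP-> _].
have lt_C'X' : size (filter p C) < size (filter p X) by rewrite !size_filter.
have [x] := IHN (fun k => f k.+1) _ _ f_coarsen' f_inj' f1_const lt_C'X'.
rewrite mem_filter => /andP[/eqP fx_r xX] lt_x; exists x => // -[|k].
  have all0 s : {subset s <= X ++ C} -> count (preim (f 0) (pred1 (f 0 x))) s = size s.
    move=> sXC; apply/eqP; rewrite -all_count; apply/allP => y ys.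
    by apply/eqP/f0_const; [exact: sXC | rewrite mem_cat xX].
  by rewrite !all0 // => y; rewrite mem_cat => ->; rewrite ?orbT.
have fiber_x s : count (preim (f k.+1) (pred1 (f k.+1 x))) (filter p s) =
                 count (preim (f k.+1) (pred1 (f k.+1 x))) s.
  by apply: count_fiber_filter => y /(f_coarsen 1 k.+1) fyx; rewrite /p /= fyx // fx_r.
by have := lt_x k; rewrite /= !fiber_x.
Qed.

Lemma exists_pivot b (X C : seq int) : b != 1 -> size C < size X ->
  exists2 x, x \in X & leE (ordsum b x C) (ordsum b x (rem x X)).
Proof.
move=> b_neq1 lt_CX; pose f k (x : int) := (x %% (b ^ k)%N%:Z)%Z.
have fE k x y : (f k x == f k y) = ((b ^ k)%:Z %| (x - y)%R)%Z by apply: eqz_mod_dvd.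
have f_coarsen k l x y : k <= l -> f l x = f l y -> f k x = f k y.
  move=> le_kl /eqP; rewrite fE => dvd_l; apply/eqP; rewrite fE.
  exact: dvdz_trans (dvdz_exp2l b le_kl) dvd_l.
have f_inj : {in X &, injective (f (diam X).+1)}.
  move=> x y xX yX /eqP; rewrite fE; apply: contraTeq => ne_xy.
  by apply: dvdz_exp_small; rewrite ?subr_eq0 ?ltnS ?diam_ge.
have f0_const : {in X ++ C &, forall x y, f 0 x = f 0 y} by move=> x y _ _; rewrite /f !modz1.
have [x xX lt_x] := nested_fiber_descent f_coarsen f_inj f0_const lt_CX.
exists x => //; apply: leE_sumE_count => k; rewrite !count_map.
have fiberE s : count (preim (fun y => ord b (x - y)%R) (leE (Some k))) s =
                count (preim (f k) (pred1 (f k x))) s.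
  by apply: eq_count => y; rewrite -[LHS]/(leE _ _) ord_ge -fE eq_sym.
rewrite !fiberE -ltnS; have := lt_x k.
by rewrite ((permP (perm_to_rem xX)) _) /= eqxx.
Qed.

Lemma enat_argmin (P : int -> Prop) (g : int -> enat) y0 : P y0 ->
  exists y, P y /\ forall y', P y' -> leE (g y) (g y').
Proof.
move=> Py0; have [fin|inf] := classic (exists k y, P y /\ g y = Some k); last first.
  have gNone y : P y -> g y = None.
    by case E: (g y) => [k|] // Py; case: inf; exists k, y.
  by exists y0; split=> // y' Py'; rewrite !gNone.
have [k [[[y [Py gy]] k_min] _]] :=
  dec_inh_nat_subset_has_unique_least_element _ (fun k => classic _) fin.
exists y; split=> // y' Py'; rewrite gy; case E: (g y') => [k'|] //=.
by apply/leP/k_min; exists y'.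
Qed.

Lemma sumordE b c i x : sumord b c i x = ordsum b x [seq c j | j <- iota 0 i].
Proof. by rewrite /sumord /ordsum -map_comp. Qed.

Definition greedy_step (S : int -> Prop) b (l : seq int) : int :=
  epsilon (inhabits 0%R)
    (fun y => S y /\ forall y', S y' -> leE (ordsum b y l) (ordsum b y' l)).

Fixpoint greedy_prefix (S : int -> Prop) b i : seq int :=
  if i is i'.+1 then rcons (greedy_prefix S b i') (greedy_step S b (greedy_prefix S b i'))
  else [::].

Lemma b_ordering_exists (S : int -> Prop) b s0 : S s0 -> exists c, is_b_ordering S b c.
Proof.
move=> Ss0; pose c i := greedy_step S b (greedy_prefix S b i).
have stepP l : S (greedy_step S b l) /\
    forall y', S y' -> leE (ordsum b (greedy_step S b l) l) (ordsum b y' l).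
  exact: epsilon_spec (enat_argmin _ Ss0).
have prefixE i : greedy_prefix S b i = [seq c j | j <- iota 0 i].
  by elim: i => // i IHi; rewrite -addn1 iotaD map_cat -IHi cats1 addn1.
exists c; split=> [i|i _ y Sy]; first exact: (stepP _).1.
by rewrite !sumordE -prefixE; apply: (stepP _).2.
Qed.

Section BOrdering.

Variables (S : int -> Prop) (s0 : int).
Hypothesis S_s0 : S s0.

Lemma some_b_orderingP b : is_b_ordering S b (some_b_ordering S b).
Proof. exact: epsilon_spec (b_ordering_exists b S_s0). Qed.

Lemma alpha_min b k x : S x ->
  leE (alpha S b k) (ordsum b x [seq some_b_ordering S b j | j <- iota 0 k]).
Proof.
case: k => [|k] Sx; first exact: leE_Some0.
by rewrite -sumordE; apply: (some_b_orderingP b).2.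
Qed.

Lemma alpha_finite_uniq b k : alpha S b k != None ->
  uniq [seq some_b_ordering S b i | i <- iota 0 k.+1].
Proof.
(* A repetition c_i = c_j with i < j makes the j-th minimal sum infinite, hence also the
   sum over the first j terms inside alpha_k. *)
have [S_c c_min] := some_b_orderingP b; set c := some_b_ordering S b in S_c c_min *.
move=> alpha_fin; rewrite map_inj_in_uniq ?iota_uniq // => i j.
rewrite !mem_iota /= !add0n !ltnS.
wlog lt_ij : i j / i < j => [wlog_ij le_ik le_jk eq_c|_ le_jk eq_c].
  by case: (ltngtP i j) => [lt_ij|lt_ji|//]; [exact: wlog_ij | exact/esym/wlog_ij].
have cj_None : sumord b c j (c j) = None.
  by apply: sumE_None; apply/mapP; exists i; rewrite ?mem_iota // eq_c subrr ord0.
have ck_None : sumord b c j (c k) = None.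
  by move: (c_min j (leq_ltn_trans (leq0n i) lt_ij) _ (S_c k)); rewrite cj_None; case: sumord.
have split_k : iota 0 k = iota 0 j ++ iota j (k - j) by rewrite -iotaD subnKC.
move: alpha_fin; rewrite /alpha /= /sumord split_k map_cat sumE_cat.
by rewrite -/(sumord b c j (c k)) ck_None.
Qed.

Lemma sum_alpha_le_ordpairs b n X : b != 1 -> size X = n.+1 -> (forall x, x \in X -> S x) ->
  leE (\big[addE/Some 0]_(k < n.+1) alpha S b k) (ordpairs b X).
Proof.
move=> b_neq1; elim: n X => [|n IHn] X size_X S_X; first by rewrite big_ord1; exact: leE_Some0.
set C := [seq some_b_ordering S b j | j <- iota 0 n.+1].
have [|x xX le_x] := @exists_pivot b X C b_neq1; first by rewrite size_map size_iota size_X.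
rewrite big_ord_recr /= (ordpairs_rem b xX) addEC; apply: leE_add.
  exact: leE_trans (alpha_min _ _ (S_X x xX)) le_x.
by apply: IHn => [|y /mem_rem /S_X //]; rewrite size_rem // size_X.
Qed.

End BOrdering.

Lemma sum_alpha_le_gamma (S : int -> Prop) b n a : b != 1 -> (forall i, i <= n -> S (a i)) ->
  leE (\big[addE/Some 0]_(k < n.+1) alpha S b k) (gamma b n a).
Proof.
move=> b_neq1 S_a; rewrite gammaE.
apply: (sum_alpha_le_ordpairs (S_a 0 (leq0n n))) => //; first by rewrite size_map size_iota.
by move=> x /mapP[i]; rewrite mem_iota ltnS => /andP[_ /S_a S_ai] ->.
Qed.

Lemma alpha_le_gamma (S : int -> Prop) b k t : b != 1 -> (forall i, i <= k -> S (t i)) ->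
  leE (alpha S b k) (gamma b k t).
Proof.
move=> b_neq1 S_t; apply: leE_trans (sum_alpha_le_gamma b_neq1 S_t).
by rewrite big_ord_recr /= addEC leE_addr.
Qed.

Lemma powE_gamma_large n a : exists D, forall b, D < b -> powE b (gamma b n a) <= 1.
Proof.
exists (diam [seq a i | i <- iota 0 n.+1]) => b lt_b.
rewrite gammaE ordpairs_small => [|x y xs ys]; last exact: leq_ltn_trans (diam_ge xs ys) lt_b.
by case: uniq => //=; case: (b == 1).
Qed.

Lemma powE_alpha_large (S : int -> Prop) s0 k : S s0 ->
  exists D, forall b, D < b -> powE b (alpha S b k) <= 1.
Proof.
move=> S_s0.
have [[b0 [b0_neq1 fin]]|inf] := classic (exists b0, b0 != 1 /\ alpha S b0 k != None).
  set t := [seq some_b_ordering S b0 i | i <- iota 0 k.+1].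
  exists (diam t) => b lt_b; have [->|b_neq1] := eqVneq b 1; first by rewrite powE1.
  have := @alpha_le_gamma S b k _ b_neq1 (fun i _ => (some_b_orderingP S_s0 b0).1 i).
  rewrite gammaE ordpairs_small ?(alpha_finite_uniq S_s0 fin); first by case: alpha => [[]|].
  by move=> x y xt yt; apply: leq_ltn_trans (diam_ge xt yt) lt_b.
exists 0 => b _; have [->|b_neq1] := eqVneq b 1; first by rewrite powE1.
suff -> : alpha S b k = None by rewrite /= (negbTE b_neq1).
by apply/eqP/negPn/negP => alpha_fin; apply: inf; exists b.
Qed.

Lemma prod_powE_alpha_dvd (S : int -> Prop) n a b : (forall i, i <= n -> S (a i)) ->
  \prod_(k < n.+1) powE b (alpha S b k) %| powE b (gamma b n a).
Proof.
move=> S_a; have [->|b_neq1] := eqVneq b 1.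
  by rewrite powE1 big1 // => k _; rewrite powE1.
rewrite -(big_morph _ (powE_addE b) (expn0 b : powE b (Some 0) = 1)); apply: powE_dvd.
exact: sum_alpha_le_gamma.
Qed.

Lemma HasProd_exists (T : nat -> Prop) f D : (forall b, D < b -> f b <= 1) ->
  exists v, HasProd T f v.
Proof.
move=> f_small; have [[b [Tb fb0]]|no0] := classic (exists b, T b /\ f b = 0).
  by exists 0; left; exists b.
pose s := [seq b <- iota 0 D.+1 | excluded_middle_informative (T b) && (f b != 1)].
exists (\prod_(b <- s) f b); right; split=> [b Tb fb0|]; first by apply: no0; exists b.
exists s; split; first by rewrite filter_uniq ?iota_uniq.
split=> // b; rewrite mem_filter mem_iota /= ltnS.
case: excluded_middle_informative => [Tb|NTb] /=; last by split=> [|[]].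
split=> [/andP[/eqP fb1 _] //|[_ fb1]].
have fb0 : f b <> 0 by move=> fb0; apply: no0; exists b.
by apply/andP; split; [apply/eqP | rewrite leqNgt; apply/negP => /f_small; lia].
Qed.

Lemma HasProd_prodE (T : nat -> Prop) f v s : HasProd T f v ->
    (forall b, T b -> f b <> 0) -> uniq s -> (forall b, b \in s -> T b) ->
    (forall b, T b -> f b <> 1 -> b \in s) ->
  v = \prod_(b <- s) f b.
Proof.
case=> [[b [Tb [fb0 _]]] f_neq0|[_ [s' [uniq_s' [s'E ->]]]] _ uniq_s sT supp_s].
  by case: (f_neq0 b Tb).
rewrite -[RHS](big_rmcond_in muln (P := fun b => f b != 1)) => [|b _ /negPn/eqP //].
rewrite -[RHS]big_filter; apply: perm_big; apply: uniq_perm; rewrite ?filter_uniq // => b.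
rewrite mem_filter; apply/idP/andP => [/s'E [Tb fb1]|[/eqP fb1 bs]].
  by split; [apply/eqP | apply: supp_s].
by apply/s'E; split; first exact: sT.
Qed.

Lemma HasProd_dvd (T : nat -> Prop) f v m (g : nat -> nat -> nat) w :
    HasProd T f v -> (forall k, k < m -> HasProd T (g k) (w k)) ->
    (forall b, T b -> \prod_(k < m) g k b %| f b) ->
  \prod_(k < m) w k %| v.
Proof.
case=> [[b [_ [_ ->]]]|[f_neq0 [s [uniq_s [sE ->]]]]] g_w g_dvd_f; first exact: dvdn0.
have sT b : b \in s -> T b by case/sE.
have g_f k b : k < m -> T b -> g k b %| f b.
  move=> lt_km Tb; apply: dvdn_trans (g_dvd_f b Tb).
  by rewrite (bigD1 (Ordinal lt_km)) //= dvdn_mulr.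
have wE k : k < m -> w k = \prod_(b <- s) g k b.
  move=> lt_km; apply: HasProd_prodE (g_w k lt_km) _ uniq_s sT _ => [b Tb gb0|b Tb gb1].
    by move: (g_f k b lt_km Tb); rewrite gb0 dvd0n => /eqP/(f_neq0 b Tb).
  by apply/sE; split=> // fb1; move: (g_f k b lt_km Tb); rewrite fb1 dvdn1 => /eqP.
rewrite (eq_bigr _ (fun (k : 'I_m) _ => wE k (ltn_ord k))) exchange_big /=.
rewrite big_seq [X in _ %| X]big_seq.
apply: (@big_ind2 _ _ (fun x y => x %| y)) => // [x1 x2 y1 y2|b bs]; first exact: dvdn_mul.
exact: g_dvd_f (sT b bs).
Qed.

Theorem theorem3p15 (S : int -> Prop) (n : nat) (a : nat -> int) (T : nat -> Prop) :
  (forall i, i <= n -> S (a i)) ->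
  exists (v : nat) (w : nat -> nat),
    HasProd T (fun b => powE b (gamma b n a)) v /\
    (forall k, k <= n -> IsGenFact S T k (w k)) /\
    (\prod_(k < n.+1) w k %| v).
Proof.
move=> S_a; have S_a0 := S_a 0 (leq0n n).
have [v gamma_v] : exists v, HasProd T (fun b => powE b (gamma b n a)) v.
  by have [D large] := powE_gamma_large n a; apply: HasProd_exists large.
have alpha_w k : exists w, IsGenFact S T k w.
  by have [D large] := powE_alpha_large k S_a0; apply: HasProd_exists large.
pose w k := epsilon (inhabits 0) (IsGenFact S T k).
have w_spec k : IsGenFact S T k (w k) by apply: epsilon_spec.
exists v, w; split=> //; split=> [k _|]; first exact: w_spec.
apply: HasProd_dvd gamma_v (fun k _ => w_spec k) _ => b _.
exact: prod_powE_alpha_dvd.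
Qed.
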